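(* Let $q=2^n$, let $B$ be a $k$-subset of $\mathrm{GF}(q)$ with $k\ge3$, and let $\mathcal B=\mathrm{GA}_1(q)(B)$. Suppose that $\hat f_B(\mu)=\sum_{x\in\mathrm{GF}(q)}(-1)^{\mathrm{Tr}(x^t+\mu^dx)}$ for all $\mu\in\mathrm{GF}(q)$, where $t,d$ are positive integers with $\gcd(td,q-1)=1$. Then $(\mathrm{GF}(q),\mathcal B)$ is a $3$-design if and only if the number $|\{x\in\mathrm{GF}(q):(u^dx+(1+u)^d)^t+x^t+1=0\}|$ is independent of $u\in\mathrm{GF}(q)\setminus\mathrm{GF}(2)$.
   Context: $\mathrm{Tr}$ is the absolute trace $\mathrm{GF}(2^n)\to\mathrm{GF}(2)$. $f_B$ is the characteristic function of $B$ as a Boolean function, and $\hat f(\mu)=\sum_{x\in\mathrm{GF}(2^n)}(-1)^{f(x)+\mathrm{Tr}(\mu x)}$ is the Walsh transform. $\mathrm{GA}_1(q)$ is the group of permutations $x\mapsto ax+b$ of $\mathrm{GF}(q)$ with $a\ne0$; $\mathrm{GA}_1(q)(B)=\{\pi(B):\pi\in\mathrm{GA}_1(q)\}$. A pair $(\mathcal P,\mathcal B)$ with $\mathcal B$ a set of $k$-subsets of $\mathcal P$ is a $3$-design if every $3$-subset of $\mathcal P$ lies in exactly $\lambda$ members of $\mathcal B$ for some constant $\lambda$. *)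

From HB Require Import structures.
From mathcomp Require Import all_boot all_order all_algebra all_field.
Set Implicit Arguments. Unset Strict Implicit. Unset Printing Implicit Defensive.
Import GRing.Theory.
Local Open Scope ring_scope.

(* Absolute trace GF(2^n) -> GF(2), valued in F (its values are 0 or 1). *)
Definition Tr (F : finFieldType) (n : nat) (x : F) : F :=
  \sum_(i < n) x ^+ (2 ^ i).

Definition trsign (F : finFieldType) (n : nat) (y : F) : int :=
  if Tr n y == 0 then 1 else -1.

Definition walsh (F : finFieldType) (n : nat) (f : F -> bool) (mu : F) : int :=
  \sum_(x : F) (-1) ^+ (f x) * trsign n (mu * x).

Definition GA1_orbit (F : finFieldType) (B : {set F}) : {set {set F}} :=
  [set [set ab.1 * x + ab.2 | x in B] | ab in [set ab : F * F | ab.1 != 0]].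

Definition is_t_design (P : finType) (t k : nat) (blocks : {set {set P}}) : Prop :=
  (forall Bl, Bl \in blocks -> #|Bl| = k) /\
  exists lambda : nat, forall T : {set P}, #|T| = t ->
    #|[set Bl in blocks | T \subset Bl]| = lambda.

From HB Require Import structures.
From mathcomp Require Import all_boot all_order all_algebra all_field.
From mathcomp Require Import ring lra zify.
Set Implicit Arguments. Unset Strict Implicit. Unset Printing Implicit Defensive.
Import GRing.Theory.
Local Open Scope ring_scope.

(* Put e(x) = (-1)^[x \in B] and, for u outside {0, 1},
   T(u) = sum_(x, y) e(x) e(y) e(x + u (y - x)).
   Expanding e = 1 - 2 [_ \in B] shows that T(u) is an affine function of the
   number N(u) of pairs x <> y of points of B with x + u (y - x) in B, and N(u)
   is |Stab(B)| times the number of blocks through {0, 1, u}.  Since every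
   3-subset of GF(q) is an affine image of some {0, 1, u}, B is a 3-design iff
   N is constant.
   On the Fourier side, q T(u) = sum_mu f(mu) f(mu (1 + u)) f(mu u); inserting
   the assumed spectrum, substituting lambda = mu^d and summing over lambda
   first gives T(u) = q (Z(u) - 1), where Z(u) is the number of roots in the
   statement.  Hence N is constant iff Z is. *)

Lemma sum_mem_natr (R : pzSemiRingType) (T : finType) (A : {set T}) :
  \sum_(x : T) ((x \in A)%:R : R) = #|A|%:R.
Proof.
by rewrite -sum1_card natr_sum [RHS]big_mkcond; apply: eq_bigr => x _; case: (x \in A).
Qed.

Lemma expf_inj_coprime (F : finFieldType) (m : nat) :
  (0 < m)%N -> coprime m #|F|.-1 -> injective (fun x : F => x ^+ m).
Proof.
move=> m_gt0 co_m x y /= eq_xy.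
have [x0|x0] := eqVneq x 0.
  by move/eqP: eq_xy; rewrite x0 expr0n gtn_eqF // eq_sym expf_eq0 m_gt0 => /eqP.
have [y0|y0] := eqVneq y 0.
  by move/eqP: eq_xy; rewrite y0 expr0n gtn_eqF // expf_eq0 m_gt0 (negbTE x0).
pose z := x / y.
have zm : z ^+ m = 1 by rewrite exprMn exprVn eq_xy mulfV // expf_neq0.
have zq : z ^+ #|F|.-1 = 1.
  have z0 : z != 0 by rewrite mulf_neq0 ?invr_neq0.
  have q_gt0 : (0 < #|F|)%N by apply/card_gt0P; exists 0.
  by apply: (mulfI z0); rewrite -exprS prednK // expf_card mulr1.
suff z1 : z = 1 by apply: (divIf y0); rewrite divff.
have [u v bezout _] := egcdnP #|F|.-1 m_gt0.
move: co_m; rewrite /coprime => /eqP g1; rewrite g1 in bezout.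
have := congr1 (fun e => z ^+ e) bezout.
by rewrite /= exprD mulnC [(v * _)%N]mulnC !exprM zm zq !expr1n mul1r expr1.
Qed.

Section Correlation.
Variables (F : finFieldType) (B : {set F}).

Definition sgnB (x : F) : int := (-1) ^+ (x \in B).

Definition triple_corr (u : F) : int :=
  \sum_x \sum_y sgnB x * sgnB y * sgnB (x + u * (y - x)).

Definition ratio_pairs (u : F) : {set F * F} :=
  [set xy : F * F | [&& xy.1 != xy.2, xy.1 \in B, xy.2 \in B
                      & xy.1 + u * (xy.2 - xy.1) \in B]].

Let ind (x : F) : int := (x \in B)%:R.

Lemma sum_ind_affine (a b : F) : a != 0 -> \sum_x ind (a * x + b) = #|B|%:R.
Proof.
move=> a0; rewrite -sum_mem_natr [RHS](reindex_inj (h := fun x => a * x + b)) //.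
by move=> x y /= /addIr /(mulfI a0).
Qed.

Lemma sum_ind3 (u : F) :
  \sum_x \sum_y ind x * ind y * ind (x + u * (y - x)) = (#|ratio_pairs u| + #|B|)%:R.
Proof.
have split_diag x y : ind x * ind y * ind (x + u * (y - x)) =
    ((x, y) \in ratio_pairs u)%:R + ((x == y) && (x \in B))%:R.
  rewrite /ind inE /=; have [->|_] := eqVneq x y; rewrite ?subrr ?mulr0 ?addr0 /=.
    by case: (y \in B).
  by case: (x \in B); case: (y \in B); case: (_ \in B).
under eq_bigr => x _ do rewrite (eq_bigr _ (fun y _ => split_diag x y)) big_split.
rewrite big_split natrD /= pair_big; congr (_ + _).
  by rewrite -(sum_mem_natr int (ratio_pairs u)); apply: eq_big => // -[].
rewrite -(sum_mem_natr int B); apply: eq_bigr => x _.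
by rewrite (bigD1 x) //= eqxx big1 ?addr0 // => y /negbTE; rewrite eq_sym => ->.
Qed.

(* Expand [sgnB = 1 - 2 ind]: for [u] outside [{0, 1}] every map
   [(x, y) |-> x + u (y - x)] with one coordinate fixed is a bijection, so all
   terms but the triple one only depend on [#|B|]. *)
Lemma triple_corr_ratio_pairs (u : F) : u != 0 -> u != 1 ->
  triple_corr u = #|F|%:R * #|F|%:R - 6 * #|F|%:R * #|B|%:R
                  + 12 * #|B|%:R * #|B|%:R - 8 * (#|ratio_pairs u| + #|B|)%:R.
Proof.
move=> u0 u1; have u1' : 1 - u != 0 by rewrite subr_eq0 eq_sym.
set q : int := #|F|%:R; set k : int := #|B|%:R.
have zy x y : x + u * (y - x) = u * y + (1 - u) * x by ring.
have zx x y : x + u * (y - x) = (1 - u) * x + u * y by ring.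
have sum_ind : \sum_x ind x = k by exact: sum_mem_natr.
have sum_const (c : int) : \sum_(x : F) c = c * q by rewrite sumr_const mulr_natr.
have expand x y : sgnB x * sgnB y * sgnB (x + u * (y - x)) =
   1 - 2 * ind x - 2 * ind y - 2 * ind (u * y + (1 - u) * x)
   + 4 * (ind x * ind y) + 4 * (ind x * ind (u * y + (1 - u) * x))
   + 4 * (ind y * ind ((1 - u) * x + u * y)) - 8 * (ind x * ind y * ind (x + u * (y - x))).
  by rewrite -zy -zx /sgnB /ind; case: (x \in B); case: (y \in B); case: (_ \in B).
have S_x : \sum_x \sum_(y : F) ind x = k * q.
  by under eq_bigr do rewrite sum_const; rewrite -mulr_suml sum_ind.
have S_z : \sum_x \sum_y ind (u * y + (1 - u) * x) = k * q.
  by under eq_bigr do rewrite sum_ind_affine //; rewrite sum_const.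
have S_xz : \sum_x ind x * \sum_y ind (u * y + (1 - u) * x) = k * k.
  by under eq_bigr do rewrite sum_ind_affine //; rewrite -mulr_suml sum_ind.
have S_yz : \sum_x \sum_y ind y * ind ((1 - u) * x + u * y) = k * k.
  rewrite exchange_big; under eq_bigr do rewrite -mulr_sumr sum_ind_affine //.
  by rewrite -mulr_suml sum_ind.
rewrite /triple_corr -sum_ind3; under eq_bigr do under eq_bigr do rewrite expand.
under eq_bigr do rewrite !big_split /= !sumrN -!mulr_sumr.
rewrite !big_split /= !sumrN -!mulr_sumr -!mulr_suml !sum_ind !sum_const S_x S_z S_xz S_yz.
ring.
Qed.

End Correlation.

Section Char2.
Variables (n : nat) (F : finFieldType).
Hypothesis cardF : #|F| = (2 ^ n)%N.

Let charF : 2 \in [pchar F] := card_finPcharP cardF (isT : prime 2).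

Let n_gt0 : (0 < n)%N.
Proof.
have : (1 < #|F|)%N by apply/card_gt1P; exists 0, 1; rewrite eq_sym oner_eq0.
by rewrite cardF; case: (n).
Qed.

Lemma exprD_pow2 (x y : F) i : (x + y) ^+ (2 ^ i) = x ^+ (2 ^ i) + y ^+ (2 ^ i).
Proof.
elim: i => [|i IH]; first by rewrite !expr1.
by rewrite expnS mulnC !exprM IH sqrrD mulr2n addrr_pchar2 // addr0.
Qed.

Lemma TrD (x y : F) : Tr n (x + y) = Tr n x + Tr n y.
Proof. by rewrite /Tr -big_split; apply: eq_bigr => i _; rewrite exprD_pow2. Qed.

Lemma Tr0 : Tr n (0 : F) = 0.
Proof. by rewrite /Tr big1 // => i _; rewrite expr0n expn_eq0. Qed.

Lemma Tr_sqr (x : F) : Tr n x ^+ 2 = Tr n x.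
Proof.
have -> : Tr n x ^+ 2 = \sum_(i < n) x ^+ (2 ^ i.+1).
  rewrite /Tr; elim/big_rec2: _ => [|i a b _ <-]; first by rewrite expr0n.
  by rewrite sqrrD mulr2n addrr_pchar2 // addr0 expnS mulnC exprM.
rewrite /Tr; case: n n_gt0 cardF => // m _ cardF'.
by rewrite big_ord_recr big_ord_recl /= -cardF' expf_card addrC.
Qed.

Lemma Tr_bool (x : F) : (Tr n x == 0) || (Tr n x == 1).
Proof.
have /eqP : Tr n x * (Tr n x - 1) = 0 by rewrite mulrBr mulr1 -expr2 Tr_sqr subrr.
by rewrite mulf_eq0 subr_eq0.
Qed.

Lemma trsign0 : trsign n (0 : F) = 1.
Proof. by rewrite /trsign Tr0 eqxx. Qed.

Lemma trsignD (x y : F) : trsign n (x + y) = trsign n x * trsign n y.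
Proof.
rewrite /trsign TrD.
by case/orP: (Tr_bool x) => /eqP->; case/orP: (Tr_bool y) => /eqP->;
  rewrite ?add0r ?addr0 ?addrr_pchar2 ?eqxx ?oner_eq0.
Qed.

(* [Tr] is a polynomial of degree [2 ^ n.-1 < #|F|] with nonzero linear
   coefficient, so it cannot vanish on all of [F]. *)
Lemma exists_Tr_neq0 : exists y : F, Tr n y != 0.
Proof.
apply/existsP; apply: contraT; rewrite negb_exists => /forallP /= Tr_eq0.
pose P : {poly F} := \sum_(i < n) 'X^(2 ^ i).
have P_Tr y : P.[y] = Tr n y.
  by rewrite horner_sum; apply: eq_bigr => i _; rewrite hornerXn.
have P_neq0 : P != 0.
  apply: contraTneq isT => P0; have : P`_1 = 1.
    rewrite coef_sum; case: n n_gt0 => // m _.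
    rewrite big_ord_recl coefXn eqxx big1 ?addr0 // => i _.
    by rewrite coefXn expnS eqn_leq andbC leqNgt (leq_pmulr _ (expn_gt0 2 i)) ?ltnn.
  by rewrite P0 coef0 => /eqP; rewrite eq_sym oner_eq0.
have all_roots : all (root P) (enum F).
  by apply/allP => y _; rewrite /root P_Tr; move/negPn: (Tr_eq0 y).
have := max_poly_roots P_neq0 all_roots (enum_uniq F).
rewrite -cardE cardF => roots_le.
have size_le : (size P <= (2 ^ n.-1).+1)%N.
  apply: leq_trans (size_sum _ _ _) _; apply/bigmax_leqP => i _.
  by rewrite size_polyXn ltnS leq_pexp2l // -ltnS prednK ?n_gt0.
have := leq_trans roots_le size_le.
case: n n_gt0 => // m _; rewrite expnS /= ltnS mul2n -addnn.
by have := expn_gt0 2 m; lia.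
Qed.

Lemma sum_trsign : \sum_(x : F) trsign n x = 0.
Proof.
have [y0 Tr_y0] := exists_Tr_neq0.
have sign_y0 : trsign n y0 = -1 by rewrite /trsign (negbTE Tr_y0).
have : \sum_(x : F) trsign n x = - \sum_(x : F) trsign n x.
  rewrite {1}(reindex_inj (addIr y0)) /= -sumrN.
  by apply: eq_bigr => x _; rewrite trsignD sign_y0 mulrN1.
by move/eqP; rewrite -addr_eq0 -mulr2n -mulr_natr mulf_eq0 => /orP[/eqP|].
Qed.

Lemma sum_trsign_mul (mu : F) :
  \sum_(x : F) trsign n (mu * x) = if mu == 0 then #|F|%:R else 0.
Proof.
have [->|mu0] := eqVneq mu 0.
  by under eq_bigr do rewrite mul0r trsign0; rewrite sumr_const.
rewrite (reindex_inj (mulfI (invr_neq0 mu0))) /=.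
by under eq_bigr do rewrite mulrA mulfV // mul1r; exact: sum_trsign.
Qed.

Lemma sum_delta (f : F -> int) (c : F) :
  \sum_x f x * (if c + x == 0 then #|F|%:R else 0) = f c * #|F|%:R.
Proof.
rewrite (bigD1 c) //= addrr_pchar2 // eqxx big1 ?addr0 // => x xc.
by rewrite addr_eq0 oppr_pchar2 // eq_sym (negbTE xc) mulr0.
Qed.

Section Walsh.
Variable B : {set F}.
Local Notation W := (walsh n (fun x => x \in B)).

Lemma walsh_inversion (z : F) :
  sgnB B z * #|F|%:R = \sum_mu W mu * trsign n (mu * z).
Proof.
transitivity (\sum_x sgnB B x * \sum_mu trsign n ((z + x) * mu)).
  by under eq_bigr do rewrite sum_trsign_mul //; rewrite sum_delta.
under eq_bigr do rewrite mulr_sumr.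
rewrite exchange_big; apply: eq_bigr => mu _; rewrite mulr_suml.
by apply: eq_bigr => x _; rewrite -mulrA -trsignD //; congr (_ * trsign n _); ring.
Qed.

Lemma triple_corr_walsh (u : F) :
  triple_corr B u * #|F|%:R = \sum_mu W mu * W (mu * (1 - u)) * W (mu * u).
Proof.
transitivity (\sum_x \sum_y sgnB B x * sgnB B y *
                \sum_mu W mu * trsign n (mu * (x + u * (y - x)))).
  rewrite mulr_suml; apply: eq_bigr => x _; rewrite mulr_suml.
  by apply: eq_bigr => y _; rewrite -mulrA walsh_inversion.
under eq_bigr do under eq_bigr do rewrite mulr_sumr.
under eq_bigr do rewrite exchange_big.
rewrite exchange_big; apply: eq_bigr => mu _.
rewrite -mulrA big_distrlr mulr_sumr; apply: eq_bigr => x _.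
rewrite mulr_sumr; apply: eq_bigr => y _.
have -> : mu * (x + u * (y - x)) = mu * (1 - u) * x + mu * u * y by ring.
by rewrite trsignD // /sgnB /=; ring.
Qed.

End Walsh.

Section ExpSum.
Variable t : nat.

Definition expsum (l : F) : int := \sum_x trsign n (x ^+ t + l * x).

Lemma sum_expsum3 (a b : F) :
  \sum_l expsum l * expsum (l * a) * expsum (l * b) =
  #|F|%:R * \sum_y \sum_z trsign n ((a * y + b * z) ^+ t + y ^+ t + z ^+ t).
Proof.
have expand l : expsum l * expsum (l * a) * expsum (l * b) = \sum_y \sum_z \sum_x
    trsign n (x ^+ t + y ^+ t + z ^+ t) * trsign n ((a * y + b * z + x) * l).
  rewrite -mulrA mulrC big_distrlr mulr_suml; apply: eq_bigr => y _.
  rewrite mulr_suml; apply: eq_bigr => z _; rewrite mulr_sumr; apply: eq_bigr => x _ /=.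
  by rewrite -!trsignD //; congr (trsign n _); ring.
under eq_bigr do rewrite expand.
rewrite exchange_big mulr_sumr; apply: eq_bigr => y _.
rewrite exchange_big mulr_sumr; apply: eq_bigr => z _.
rewrite exchange_big; under eq_bigr do rewrite -mulr_sumr sum_trsign_mul //.
by rewrite sum_delta mulrC.
Qed.

Hypotheses (t_gt0 : (0 < t)%N) (coprime_t : coprime t (2 ^ n).-1).

Lemma sum_trsign_pow (c : F) :
  \sum_y trsign n (y ^+ t * c) = if c == 0 then #|F|%:R else 0.
Proof.
have expt_inj : injective (fun y : F => y ^+ t) by apply: expf_inj_coprime; rewrite ?cardF.
rewrite -sum_trsign_mul [RHS](reindex_inj expt_inj) /=.
by apply: eq_bigr => y _; rewrite mulrC.
Qed.

(* For [y = 0] the sum over [z] vanishes since [b ^+ t + 1 != 0]; for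
   [y != 0] substitute [z = y w] and sum over [y] first. *)
Lemma sum2_trsign_pow (a b : F) : b ^+ t != 1 ->
  \sum_y \sum_z trsign n ((a * y + b * z) ^+ t + y ^+ t + z ^+ t) =
  #|F|%:R * #|[set w : F | (b * w + a) ^+ t + w ^+ t + 1 == 0]|%:R - #|F|%:R.
Proof.
move=> bt_neq1; rewrite (bigD1 0) //=.
have y0_term z : (a * 0 + b * z) ^+ t + 0 ^+ t + z ^+ t = z ^+ t * (b ^+ t + 1).
  by rewrite expr0n gtn_eqF // mulr0 add0r addr0 exprMn; ring.
rewrite (eq_bigr _ (fun z _ => congr1 (trsign n) (y0_term z))) sum_trsign_pow.
rewrite ifF ?add0r; last by rewrite addr_eq0 oppr_pchar2 // (negbTE bt_neq1).
have subst_z y : y != 0 -> \sum_z trsign n ((a * y + b * z) ^+ t + y ^+ t + z ^+ t) =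
    \sum_w trsign n (y ^+ t * ((b * w + a) ^+ t + w ^+ t + 1)).
  move=> y0; rewrite (reindex_inj (mulfI y0)); apply: eq_bigr => w _ /=.
  have -> : a * y + b * (y * w) = y * (b * w + a) by ring.
  by rewrite !exprMn; congr (trsign n _); ring.
have sum_neq0 (c : F) :
    \sum_(y | y != 0) trsign n (y ^+ t * c) = (if c == 0 then #|F|%:R else 0) - 1.
  rewrite -(sum_trsign_pow c) [in RHS](bigD1 0) //= expr0n gtn_eqF // mul0r trsign0.
  by rewrite addrC addrK.
rewrite (eq_bigr _ subst_z) exchange_big /=; under eq_bigr do rewrite sum_neq0.
by rewrite sumrB -big_mkcond /= !sumr_const mulr_natr cardsE; congr (_ - _).
Qed.

End ExpSum.

End Char2.

Lemma cards3P (T : finType) (A : {set T}) :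
  reflect (exists x y z, [/\ x != y, y != z, z != x & A = [set x; y; z]]) (#|A| == 3).
Proof.
have card_gt2 (x y z : T) : x != y -> y != z -> z != x -> (2 < #|[set x; y; z]|)%N.
  by move=> xy yz zx; apply/card_gt2P; exists x, y, z; rewrite !inE !eqxx ?orbT.
apply: (iffP eqP) => [A3 | [x [y [z [xy yz zx ->]]]]]; last first.
  apply/eqP; rewrite eqn_leq card_gt2 // andbT.
  apply: leq_trans (leq_card_setU _ _) _; rewrite cards2 cards1 addn1 ltnS.
  by case: (x != y).
have /card_gt2P [x [y [z [[xA yA zA] [xy yz zx]]]]] : (2 < #|A|)%N by rewrite A3.
exists x, y, z; split => //; apply/eqP.
by rewrite eq_sym eqEcard !subUset !sub1set xA yA zA A3 card_gt2.
Qed.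

Section AffineOrbit.
Variables (F : finFieldType) (B : {set F}).

Definition affine_maps : {set F * F} := [set ab : F * F | ab.1 != 0].

Definition affine_image (ab : F * F) (S : {set F}) : {set F} :=
  [set ab.1 * x + ab.2 | x in S].

Definition affine_comp (ab0 ab : F * F) : F * F := (ab0.1 * ab.1, ab0.1 * ab.2 + ab0.2).

Definition affine_stab : {set F * F} :=
  [set ab in affine_maps | affine_image ab B == B].

Definition affine_covers (T : {set F}) : {set F * F} :=
  [set ab in affine_maps | T \subset affine_image ab B].

Lemma GA1_orbitE : GA1_orbit B = [set affine_image ab B | ab in affine_maps].
Proof. by []. Qed.

Lemma mem_affine_image (ab : F * F) (S : {set F}) (y : F) : ab.1 != 0 ->
  (y \in affine_image ab S) = ((y - ab.2) / ab.1 \in S).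
Proof.
move=> a0; apply/imsetP/idP => [[x xS ->]|yS].
  by rewrite addrK mulrC mulKf.
by exists ((y - ab.2) / ab.1) => //; rewrite mulrC divfK // subrK.
Qed.

Lemma affine_image_comp (ab0 ab : F * F) (S : {set F}) :
  affine_image (affine_comp ab0 ab) S = affine_image ab0 (affine_image ab S).
Proof. by rewrite /affine_image -imset_comp; apply: eq_imset => x /=; ring. Qed.

Lemma affine_image_inj (ab : F * F) : ab.1 != 0 -> injective (affine_image ab).
Proof. by move=> a0; apply: imset_inj => x y /= /addIr /(mulfI a0). Qed.

Lemma card_affine_fiber (Bl : {set F}) : Bl \in GA1_orbit B ->
  #|[set ab in affine_maps | affine_image ab B == Bl]| = #|affine_stab|.
Proof.
rewrite GA1_orbitE => /imsetP[ab0]; rewrite inE => a0 ->.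
have comp_inj : injective (affine_comp ab0).
  by move=> [a b] [a' b'] [] /(mulfI a0) -> /addIr /(mulfI a0) ->.
rewrite -(card_imset (mem affine_stab) comp_inj); apply: eq_card => ab.
apply/idP/imsetP => [|[ab' + ->]].
  rewrite !inE => /andP[a1 /eqP img_ab].
  have ab_comp : ab = affine_comp ab0 (ab.1 / ab0.1, (ab.2 - ab0.2) / ab0.1).
    by case: ab a1 {img_ab} => a b a1; rewrite /affine_comp /=; congr pair; field.
  exists (ab.1 / ab0.1, (ab.2 - ab0.2) / ab0.1) => //.
  rewrite !inE /= mulf_neq0 ?invr_neq0 //=; apply/eqP/(affine_image_inj a0).
  by rewrite -affine_image_comp -ab_comp.
rewrite !inE => /andP[a1 /eqP img_ab'].
by rewrite /= mulf_neq0 //= affine_image_comp img_ab'.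
Qed.

Lemma card_blocks_covers (T : {set F}) :
  (#|[set Bl in GA1_orbit B | T \subset Bl]| * #|affine_stab|)%N = #|affine_covers T|.
Proof.
rewrite -sum_nat_const -[#|affine_covers T|]sum1_card.
rewrite (partition_big (affine_image^~ B) [in [set Bl in GA1_orbit B | T \subset Bl]]).
  apply: eq_bigr => Bl; rewrite inE => /andP[orbit_Bl T_Bl].
  rewrite -(card_affine_fiber orbit_Bl) -sum1_card; apply: eq_bigl => ab.
  rewrite !inE; case: (affine_image ab B =P Bl) => [->|_]; last by rewrite !andbF.
  by rewrite T_Bl !andbT.
move=> ab; rewrite !inE => /andP[a0 T_ab]; rewrite T_ab andbT GA1_orbitE.
by apply/imsetP; exists ab; rewrite ?inE.
Qed.

Lemma card_covers3 (p q r : F) : p != q -> q != r -> r != p ->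
  #|affine_covers [set p; q; r]| = #|ratio_pairs B ((r - p) / (q - p))|.
Proof.
move=> pq qr rp; set u := (r - p) / (q - p).
have qp0 : q - p != 0 by rewrite subr_eq0 eq_sym.
pose g (xy : F * F) : F * F :=
  ((q - p) / (xy.2 - xy.1), p - (q - p) / (xy.2 - xy.1) * xy.1).
have g_inj : {in ratio_pairs B u &, injective g}.
  move=> [x y] [x' y']; rewrite !inE /= => /andP[xy _] /andP[xy' _] [E1 E2].
  have dyx : y - x = y' - x' by move: E1 => /(mulfI qp0) /invr_inj.
  have a0 : (q - p) / (y - x) != 0 by rewrite mulf_neq0 ?invr_neq0 // subr_eq0 eq_sym.
  rewrite -E1 in E2; move: E2 => /addrI /oppr_inj /(mulfI a0) ex.
  by move: dyx; rewrite ex => /addIr ->.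
rewrite -(card_in_imset g_inj); apply: eq_card => -[a b]; apply/idP/imsetP.
  rewrite !inE /= => /andP[a0]; rewrite !subUset !sub1set !mem_affine_image //=.
  move=> /andP[/andP[pB qB] rB].
  exists ((p - b) / a, (q - b) / a).
    rewrite inE /= pB qB /=.
    have -> : (p - b) / a + u * ((q - b) / a - (p - b) / a) = (r - b) / a.
      by rewrite /u; field; apply/andP; split.
    rewrite rB andbT; apply: contra pq => /eqP E.
    by apply/eqP; move: E => /(mulIf (invr_neq0 a0)) /addIr.
  rewrite /g /=; have -> : (q - b) / a - (p - b) / a = (q - p) / a by field.
  by congr pair; field; apply/andP; split.
move=> [[x y]]; rewrite inE /= => /and4P[xy xB yB zB] ->.
have yx0 : y - x != 0 by rewrite subr_eq0 eq_sym.
have a0 : (q - p) / (y - x) != 0 by rewrite mulf_neq0 ?invr_neq0.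
rewrite !inE /= a0 !subUset !sub1set !mem_affine_image //=.
have -> : (p - (p - (q - p) / (y - x) * x)) / ((q - p) / (y - x)) = x by field; rewrite yx0 qp0.
have -> : (q - (p - (q - p) / (y - x) * x)) / ((q - p) / (y - x)) = y by field; rewrite yx0 qp0.
have -> : (r - (p - (q - p) / (y - x) * x)) / ((q - p) / (y - x)) = x + u * (y - x).
  by rewrite /u; field; rewrite yx0 qp0.
by rewrite xB yB zB.
Qed.

Lemma affine_stab_gt0 : (0 < #|affine_stab|)%N.
Proof.
apply/card_gt0P; exists (1, 0); rewrite !inE /= oner_eq0 /=.
by apply/eqP/setP => x; rewrite mem_affine_image ?oner_eq0 //= subr0 divr1.
Qed.

Lemma is_3_design_iff (k : nat) : #|B| = k ->
  is_t_design 3 k (GA1_orbit B) <->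
  exists c, forall u : F, u != 0 -> u != 1 -> #|ratio_pairs B u| = c.
Proof.
move=> cardB; split => [[_ [lam Hlam]] | [c Hc]].
  exists (lam * #|affine_stab|)%N => u u0 u1.
  have n01 : (0 : F) != 1 by rewrite eq_sym oner_eq0.
  have n1u : (1 : F) != u by rewrite eq_sym.
  have := card_covers3 n01 n1u u0; rewrite !subr0 divr1 => <-.
  rewrite -card_blocks_covers Hlam //; apply/eqP/cards3P.
  by exists 0, 1, u.
split.
  move=> Bl /imsetP[ab]; rewrite inE => a0 ->.
  by rewrite card_imset -?cardB // => x y /= /addIr /(mulfI a0).
exists (c %/ #|affine_stab|)%N => T /eqP/cards3P [x [y [z [xy yz zx ->]]]].
have yx0 : y - x != 0 by rewrite subr_eq0 eq_sym.
have u0 : (z - x) / (y - x) != 0 by rewrite mulf_neq0 ?invr_neq0 // subr_eq0.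
have u1 : (z - x) / (y - x) != 1.
  by apply: contra yz => /eqP/(canRL (divfK yx0)); rewrite mul1r => /addIr ->.
by rewrite -(Hc _ u0 u1) -card_covers3 // -card_blocks_covers mulnK // affine_stab_gt0.
Qed.

End AffineOrbit.

Lemma exists_const_transfer (T : finType) (a b : T) (f g : T -> nat) :
  (forall u v, u != a -> u != b -> v != a -> v != b -> (f u == f v) = (g u == g v)) ->
  (exists c, forall u, u != a -> u != b -> f u = c) ->
  exists c, forall u, u != a -> u != b -> g u = c.
Proof.
move=> fg [c fc].
case: (pickP (fun u => (u != a) && (u != b))) => [u0 /andP[u0a u0b] | none].
  by exists (g u0) => u ua ub; apply/eqP; rewrite -fg // !fc.
by exists 0%N => u ua ub; move: (none u); rewrite ua ub.
Qed.

Section WalshSpectrum.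
Variables (n : nat) (F : finFieldType).
Hypothesis cardF : #|F| = (2 ^ n)%N.
Variables (B : {set F}) (t d : nat).
Hypotheses (t_gt0 : (0 < t)%N) (d_gt0 : (0 < d)%N).
Hypothesis coprime_td : coprime (t * d) (2 ^ n).-1.
Hypothesis walshB : forall mu : F, walsh n (fun x => x \in B) mu =
  \sum_(x : F) trsign n (x ^+ t + mu ^+ d * x).

Let charF : 2 \in [pchar F] := card_finPcharP cardF (isT : prime 2).

Definition root_count (u : F) : nat :=
  #|[set x : F | (u ^+ d * x + (1 + u) ^+ d) ^+ t + x ^+ t + 1 == 0]|.

Lemma triple_corr_root_count (u : F) : u != 0 -> u != 1 ->
  triple_corr B u = #|F|%:R * (root_count u)%:R - #|F|%:R.
Proof.
move=> u0 u1.
have [cop_t cop_d] : coprime t (2 ^ n).-1 /\ coprime d (2 ^ n).-1.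
  by apply/andP; rewrite -coprimeMl.
have expd_inj : injective (fun x : F => x ^+ d) by apply: expf_inj_coprime; rewrite ?cardF.
have udt_neq1 : (u ^+ d) ^+ t != 1.
  have expdt_inj : injective (fun x : F => x ^+ (d * t)).
    by apply: expf_inj_coprime; rewrite ?muln_gt0 ?d_gt0 // mulnC cardF.
  rewrite -exprM; apply: contra u1 => /eqP udt1; apply/eqP/expdt_inj.
  by rewrite /= udt1 expr1n.
have q_neq0 : (#|F|%:R : int) != 0 by rewrite Num.Theory.pnatr_eq0 cardF expn_eq0.
apply: (mulIf q_neq0); rewrite (triple_corr_walsh cardF) oppr_pchar2 //.
under eq_bigr do rewrite !walshB -!/(expsum n t _) !exprMn.
transitivity
  (\sum_l expsum n t l * expsum n t (l * (1 + u) ^+ d) * expsum n t (l * u ^+ d)).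
  by rewrite [RHS](reindex_inj expd_inj).
rewrite (sum_expsum3 cardF) (sum2_trsign_pow cardF) //.
by rewrite mulrC.
Qed.

Lemma eq_card_ratio_pairs (u v : F) : u != 0 -> u != 1 -> v != 0 -> v != 1 ->
  (#|ratio_pairs B u| == #|ratio_pairs B v|) = (root_count u == root_count v).
Proof.
pose q := #|F|; pose k := #|B|.
have q_gt0 : (0 < q)%N by rewrite /q cardF expn_gt0.
have balance w : w != 0 -> w != 1 ->
    (8 * #|ratio_pairs B w| + q * root_count w)%:R =
    (q * q)%:R - 6 * (q * k)%:R + 12 * (k * k)%:R - 8 * k%:R + q%:R :> int.
  move=> w0 w1; have := triple_corr_ratio_pairs B w0 w1.
  rewrite triple_corr_root_count // !natrD !natrM => E.
  lra.
move=> u0 u1 v0 v1; have := balance v v0 v1; rewrite -(balance u u0 u1).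
move/eqP; rewrite Num.Theory.eqr_nat => /eqP E.
apply/eqP/eqP => [Nuv | Zuv]; last by lia.
by apply/eqP; rewrite -(eqn_pmul2l q_gt0); apply/eqP; lia.
Qed.

End WalshSpectrum.

Unset Implicit Arguments.

Theorem theorem10 (n : nat) (F : finFieldType) (hF : #|F| = (2 ^ n)%N)
  (k : nat) (B : {set F}) (hB : #|B| = k) (hk : (3 <= k)%N)
  (t d : nat) (ht : (0 < t)%N) (hd : (0 < d)%N)
  (hgcd : coprime (t * d) (2 ^ n).-1)
  (hW : forall mu : F, walsh n (fun x => x \in B) mu =
          \sum_(x : F) trsign n (x ^+ t + mu ^+ d * x)) :
  is_t_design 3 k (GA1_orbit B) <->
  exists c : nat, forall u : F, u != 0 -> u != 1 ->
    #|[set x : F | (u ^+ d * x + (1 + u) ^+ d) ^+ t + x ^+ t + 1 == 0]| = c.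
Proof.
have eqN := eq_card_ratio_pairs hF ht hd hgcd hW.
split => [/(is_3_design_iff hB) | root_const].
  by apply: exists_const_transfer => u v *; rewrite eqN.
apply/(is_3_design_iff hB); apply: exists_const_transfer root_const => u v *.
by rewrite eqN.
Qed.
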